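(* Let $n\ge1$, $0\le p\le n$, $r>0$, and let $u:\Delta^n_p(r)\to[0,\infty]$ be a convex function. Then for every $r'$ with $\frac{r}{2}\le r'<r$ and every $x\in\Delta^n_p(r')$ with $x_1,\dots,x_p>0$, \[ u(x)\le\frac{(r')^p}{(r-r')^n}\int_{\Delta^n_p(r)}u\,d\mathbf{x}\cdot\frac{1}{\prod_{i=1}^p x_i}. \]
   Context: For $r>0$ and $0\le p\le n$, $\Delta^n_p(r):=\{x\in[0,\infty)^p\times(-r,r)^{n-p}\;:\;\sum_{i=1}^p x_i<r\}\subset\mathbb{R}^n$. $d\mathbf{x}$ is the $n$-dimensional Lebesgue measure. Convexity of $[0,\infty]$-valued functions is meant with the usual conventions for $+\infty$. *)

From HB Require Import structures.
From mathcomp Require Import all_boot all_order all_algebra.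
From mathcomp Require Import all_classical all_reals all_analysis.
Set Implicit Arguments. Unset Strict Implicit. Unset Printing Implicit Defensive.
Import Order.TTheory GRing.Theory Num.Theory.
Import numFieldNormedType.Exports.
Local Open Scope classical_set_scope.
Local Open Scope ring_scope.

(* Points of R^n are row vectors 'rV[R]_n; coordinate x_{i+1} is x 0 i. *)

Definition Delta (R : realType) (n p : nat) (r : R) : set 'rV[R]_n :=
  [set x | (forall i : 'I_n, (i < p)%N -> 0 <= x 0 i) /\
           (forall i : 'I_n, (p <= i)%N -> - r < x 0 i < r) /\
           \sum_(i < n | (i < p)%N) x 0 i < r].

(* n-dimensional Lebesgue integral of f over R^n, computed as the iterated
   integral dx_1 dx_2 ... dx_n of one-dimensional Lebesgue integrals
   (Tonelli). *)
Fixpoint iter_lebesgue_integral (R : realType) (n : nat) :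
  ('rV[R]_n -> \bar R) -> \bar R :=
  match n with
  | 0 => fun f => f 0
  | k.+1 => fun f =>
      (\int[@lebesgue_measure R]_(t in setT)
         iter_lebesgue_integral (fun y : 'rV[R]_k =>
           f (row_mx (const_mx t : 'rV[R]_1) y)))%E
  end.

Definition integral_on (R : realType) (n : nat) (D : set 'rV[R]_n)
  (u : 'rV[R]_n -> \bar R) : \bar R :=
  iter_lebesgue_integral (fun x => if `[< D x >] then u x else 0%E).

(* convexity of a [0,+oo]-valued function on D, with the usual conventions
   (0 * +oo = 0) *)
Definition econvex_on (R : realType) (n : nat) (D : set 'rV[R]_n)
  (u : 'rV[R]_n -> \bar R) : Prop :=
  forall (x y : 'rV[R]_n) (t : R), D x -> D y -> 0 <= t <= 1 ->
    (u ((1 - t) *: x + t *: y)%R <= (1 - t)%:E * u x + t%:E * u y)%E.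

(* Let mu = r - r' and take the box around x with half-widths
   w_i = (mu / r') x_i for i <= p and w_i = mu otherwise; since mu <= r' it
   lies in Delta^n_p(r), and r'^p * prod w_i = mu^n * prod_{i <= p} x_i.
   One of the 2^n orthants of this box at x carries u >= u(x): otherwise pick
   in each orthant a point with u < u(x); two such points on opposite sides
   of x in coordinate k have a convex combination with k-th coordinate x_k,
   still with u < u(x) by convexity, and after n rounds of merging one
   reaches x itself.  Integrating u >= u(x) over that orthant gives
   u(x) * prod w_i <= the integral. *)

From HB Require Import structures.
From mathcomp Require Import all_boot all_order all_algebra.
From mathcomp Require Import all_classical all_reals all_analysis.
From mathcomp Require Import lra ring.
Set Implicit Arguments. Unset Strict Implicit. Unset Printing Implicit Defensive.
Import Order.TTheory GRing.Theory Num.Theory.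
Local Open Scope classical_set_scope.
Local Open Scope ring_scope.

Section convex_combination.
Variable R : realType.

Lemma conv_lt (a b c t : R) : a < c -> b < c -> 0 <= t <= 1 ->
  (1 - t) * a + t * b < c.
Proof.
move=> ac bc /andP[t0 t1]; pose m := Num.max a b.
have [am bm] : a <= m /\ b <= m by split; rewrite le_max lexx ?orbT.
have mc : m < c by rewrite gt_max ac bc.
have : 0 <= (1 - t) * (m - a) by rewrite mulr_ge0 // subr_ge0.
have : 0 <= t * (m - b) by rewrite mulr_ge0 // subr_ge0.
nra.
Qed.

Lemma conv_gt (a b c t : R) : c < a -> c < b -> 0 <= t <= 1 ->
  c < (1 - t) * a + t * b.
Proof.
move=> ca cb t01; rewrite -ltrN2 opprD -!mulrN.
by apply: conv_lt; rewrite ?ltrN2.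
Qed.

Lemma lte_conv (a b c : \bar R) (t : R) : (a < c)%E -> (b < c)%E -> 0 <= t <= 1 ->
  ((1 - t)%:E * a + t%:E * b < c)%E.
Proof.
move=> ac bc /andP[t0 t1]; set m := Order.max a b.
have t1' : 0 <= 1 - t by rewrite subr_ge0.
apply: (@le_lt_trans _ _ ((1 - t)%:E * m + t%:E * m)%E).
  by apply: leeD; apply: lee_wpmul2l; rewrite ?lee_fin ?le_max ?lexx ?orbT.
by rewrite -ge0_muleDl ?lee_fin // -EFinD subrK mul1e gt_max ac bc.
Qed.

End convex_combination.

Definition open_box {R : realType} {n : nat} (a b : 'I_n -> R) : set 'rV[R]_n :=
  [set y | forall i, a i < y 0 i < b i].

Lemma row_mx_const_ord0 (R : realType) k (t : R) (y : 'rV[R]_k) :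
  row_mx (const_mx t : 'rV_1) y 0 ord0 = t.
Proof.
by rewrite (_ : ord0 = lshift k (ord0 : 'I_1)) ?row_mxEl ?mxE //; apply: val_inj.
Qed.

Lemma row_mx_const_lift (R : realType) k (t : R) (y : 'rV[R]_k) (j : 'I_k) :
  row_mx (const_mx t : 'rV_1) y 0 (lift ord0 j) = y 0 j.
Proof. by rewrite (_ : lift ord0 j = rshift 1 j) ?row_mxEr //; apply: val_inj. Qed.

Lemma open_box_conv (R : realType) n (a b : 'I_n -> R) (y1 y2 : 'rV[R]_n) t :
  open_box a b y1 -> open_box a b y2 -> 0 <= t <= 1 ->
  open_box a b ((1 - t) *: y1 + t *: y2).
Proof.
move=> y1_box y2_box t01 i; rewrite !mxE.
have /andP[a1 b1] := y1_box i; have /andP[a2 b2] := y2_box i.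
by rewrite conv_gt ?conv_lt.
Qed.

Section iterated_integral.
Variable R : realType.

(* No measurability is needed: the integral of a nonnegative function is a
   supremum over the simple functions below it. *)
Lemma ge0_le_integralT d (T : measurableType d) (mu : {measure set T -> \bar R})
    (f g : T -> \bar R) :
  (forall x, 0 <= f x)%E -> (forall x, f x <= g x)%E ->
  (\int[mu]_(x in setT) f x <= \int[mu]_(x in setT) g x)%E.
Proof.
move=> f0 fg; have g0 x : (0 <= g x)%E := le_trans (f0 x) (fg x).
rewrite !ge0_integralTE //.
apply: ereal_sup_le => _ [h hf <-]; exists h => //= x.
exact: le_trans (hf x) (fg x).
Qed.

Lemma iter_lebesgue_integral_ge0 n (f : 'rV[R]_n -> \bar R) :
  (forall y, 0 <= f y)%E -> (0 <= iter_lebesgue_integral f)%E.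
Proof.
elim: n f => [|k IH] f f0 /=; first exact: f0.
by apply: integral_ge0 => t _; apply: IH.
Qed.

Lemma iter_lebesgue_integral_open_box_ge n (f : 'rV[R]_n -> \bar R)
    (a b : 'I_n -> R) (c : \bar R) :
  (0 <= c)%E -> (forall i, a i < b i) -> (forall y, 0 <= f y)%E ->
  (forall y, open_box a b y -> c <= f y)%E ->
  (c * (\prod_(i < n) (b i - a i))%:E <= iter_lebesgue_integral f)%E.
Proof.
elim: n f a b => [|k IH] f a b c0 ab f0 fc /=.
  by rewrite big_ord0 mule1; apply: fc => -[].
set c' := (c * (\prod_(i < k) (b (lift ord0 i) - a (lift ord0 i)))%:E)%E.
have c'_le t : a ord0 < t < b ord0 ->
    (c' <= iter_lebesgue_integral (fun y => f (row_mx (const_mx t : 'rV_1) y)))%E.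
  move=> at_b; apply: IH => // y y_box.
  apply: fc => i; have [j ->|->] := unliftP ord0 i.
    by rewrite row_mx_const_lift; exact: y_box.
  by rewrite row_mx_const_ord0.
rewrite big_ord_recl EFinM muleCA muleC -/c'.
have -> : ((b ord0 - a ord0)%:E = lebesgue_measure `]a ord0, b ord0[%classic)%E.
  by rewrite lebesgue_measure_itv /= lte_fin ab EFinB.
rewrite -integral_cst; last exact: measurable_itv.
rewrite integral_mkcond.
apply: ge0_le_integralT => t; rewrite /patch; case: ifPn => [|_] //.
- move=> _; apply: mule_ge0 => //; rewrite lee_fin prodr_ge0 // => i _.
  by rewrite subr_ge0 ltW.
- by rewrite inE /= in_itv /=; exact: c'_le.
- exact: iter_lebesgue_integral_ge0.
Qed.

End iterated_integral.

Definition centered_box {R : realType} {n : nat} (x : 'rV[R]_n) (w : 'I_n -> R) :=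
  open_box (fun i => x 0 i - w i) (fun i => x 0 i + w i).

Definition orthant_box {R : realType} {n : nat} (x : 'rV[R]_n) (w : 'I_n -> R)
    (s : 'I_n -> bool) :=
  open_box (fun i => if s i then x 0 i else x 0 i - w i)
           (fun i => if s i then x 0 i + w i else x 0 i).

Lemma orthant_box_sub (R : realType) n (x : 'rV[R]_n) w s :
  orthant_box x w s `<=` centered_box x w.
Proof.
move=> y y_box i; have := y_box i.
by case: (s i) => /andP[lo hi]; apply/andP; split; lra.
Qed.

Section orthant_below.
Variables (R : realType) (n : nat) (D : set 'rV[R]_n) (u : 'rV[R]_n -> \bar R).
Variables (x : 'rV[R]_n) (w : 'I_n -> R).
Hypotheses (u_convex : econvex_on D u) (box_sub : centered_box x w `<=` D).

Lemma below_on_slices :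
    (forall s, exists2 y, orthant_box x w s y & (u y < u x)%E) ->
  forall k, (k <= n)%N -> forall s : 'I_n -> bool, exists y,
    [/\ centered_box x w y, (u y < u x)%E,
        forall i : 'I_n, (i < k)%N -> y 0 i = x 0 i &
        forall i : 'I_n, (k <= i)%N ->
          if s i then x 0 i < y 0 i else y 0 i < x 0 i].
Proof.
move=> below; elim=> [_ s|k IH kn s].
  have [y y_box uy] := below s; exists y; split => //.
    exact: orthant_box_sub y_box.
  by move=> i _; have := y_box i; case: (s i) => /andP[lo hi].
pose k' := Ordinal kn.
have [y1 [y1_box u1 eq1 side1]] := IH (ltnW kn) (fun i => (i == k') || s i).
have [y2 [y2_box u2 eq2 side2]] := IH (ltnW kn) (fun i => (i != k') && s i).
have x_lt_y1 : x 0 k' < y1 0 k' by have := side1 k' (leqnn k); rewrite eqxx.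
have y2_lt_x : y2 0 k' < x 0 k' by have := side2 k' (leqnn k); rewrite eqxx.
pose t := (y1 0 k' - x 0 k') / (y1 0 k' - y2 0 k').
have t01 : 0 <= t <= 1.
  by rewrite divr_ge0 ?ler_pdivrMr ?mul1r; lra.
pose z := (1 - t) *: y1 + t *: y2.
have zE i : z 0 i = (1 - t) * y1 0 i + t * y2 0 i by rewrite !mxE.
exists z; split.
- exact: open_box_conv.
- apply: le_lt_trans (u_convex (box_sub y1_box) (box_sub y2_box) t01) _.
  exact: lte_conv.
- move=> i; rewrite ltnS leq_eqVlt => /predU1P[ik|ik].
    have -> : i = k' by apply: val_inj.
    by rewrite zE /t; field; rewrite gt_eqF // subr_gt0 (lt_trans y2_lt_x x_lt_y1).
  by rewrite zE eq1 // eq2 //; ring.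
- move=> i ki; have ik : (i == k') = false.
    by apply/negbTE; rewrite -val_eqE neq_ltn ki orbT.
  have := side1 i (ltnW ki); have := side2 i (ltnW ki); rewrite ik /= zE.
  by case: (s i) => ? ?; [apply: conv_gt | apply: conv_lt]; rewrite ?t01.
Qed.

Lemma exists_orthant_box_ge :
  exists s, forall y, orthant_box x w s y -> (u x <= u y)%E.
Proof.
apply: contrapT => none.
have below s : exists2 y, orthant_box x w s y & (u y < u x)%E.
  apply: contrapT => not_below; apply: none; exists s => y y_box.
  by rewrite leNgt; apply/negP => uy; apply: not_below; exists y.
have [y [_ uy eqx _]] := below_on_slices below (leqnn n) (fun=> true).
have yx : y = x by apply/rowP => i; apply: eqx.
by rewrite yx ltxx in uy.
Qed.

End orthant_below.

Definition Delta_radius {R : realType} {n : nat} (p : nat) (r' mu : R)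
    (x : 'rV[R]_n) (i : 'I_n) : R :=
  if (i < p)%N then mu / r' * x 0 i else mu.

Lemma centered_box_sub_Delta (R : realType) n p (r' mu : R) (x : 'rV[R]_n) :
  0 < mu <= r' -> Delta p r' x ->
  centered_box x (Delta_radius p r' mu x) `<=` Delta p (r' + mu).
Proof.
move=> /andP[mu_gt0 mu_le] [x_ge0 [x_tail x_sum]] y y_box.
have r'_gt0 : 0 < r' by lra.
have lam_le1 : mu / r' <= 1 by rewrite ler_pdivrMr // mul1r.
have lam_ge0 : 0 <= mu / r' by rewrite divr_ge0 // ltW.
split; [|split].
- move=> i ip; have := y_box i; rewrite /Delta_radius ip => /andP[lo _].
  have := x_ge0 i ip; nra.
- move=> i ip; have := y_box i; rewrite /Delta_radius ltnNge ip /= => /andP[lo hi].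
  by have /andP[] := x_tail i ip; move=> *; apply/andP; split; lra.
- apply: (@le_lt_trans _ _ (\sum_(i < n | (i < p)%N) (1 + mu / r') * x 0 i)).
    apply: ler_sum => i ip; have := y_box i; rewrite /Delta_radius ip.
    by move=> /andP[_ hi]; lra.
  rewrite -mulr_sumr (_ : r' + mu = (1 + mu / r') * r'); last first.
    by rewrite mulrDl mul1r divfK ?gt_eqF // addrC.
  by rewrite ltr_pM2l // ltr_wpDr.
Qed.

Lemma prod_Delta_radius (R : realType) n p (r' mu : R) (x : 'rV[R]_n) :
  r' != 0 -> (p <= n)%N ->
  r' ^+ p * \prod_(i < n) Delta_radius p r' mu x i =
  mu ^+ n * \prod_(i < n | (i < p)%N) x 0 i.
Proof.
move=> r'_neq0 pn.
have prod_lt_p (c : R) : \prod_(i < n | (i < p)%N) c = c ^+ p.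
  by rewrite -(big_ord_widen n (fun=> c) pn) prodr_const card_ord.
have -> : mu ^+ n = mu ^+ p * \prod_(i < n | ~~ (i < p)%N) mu.
  rewrite -prod_lt_p -[in LHS](card_ord n) -prodr_const.
  exact: (bigID (fun i : 'I_n => (i < p)%N)).
rewrite [X in _ * X](bigID (fun i : 'I_n => (i < p)%N)) /=.
rewrite (eq_bigr (fun i => mu / r' * x 0 i)); last first.
  by move=> i ip; rewrite /Delta_radius ip.
rewrite (eq_bigr (fun=> mu)); last by move=> i /negbTE ip; rewrite /Delta_radius ip.
by rewrite big_split /= prod_lt_p expr_div_n; field; rewrite expf_neq0.
Qed.

Theorem mainTheorem2 (R : realType) (n p : nat) (r : R)
  (u : 'rV[R]_n -> \bar R) :
  (1 <= n)%N -> (p <= n)%N -> 0 < r ->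
  (forall x, Delta p r x -> (0 <= u x)%E) ->
  econvex_on (Delta p r) u ->
  forall r' : R, r / 2 <= r' -> r' < r ->
  forall x : 'rV[R]_n, Delta p r' x ->
  (forall i : 'I_n, (i < p)%N -> 0 < x 0 i) ->
  (u x <= (r' ^+ p / (r - r') ^+ n)%:E * integral_on (Delta p r) u
           * ((\prod_(i < n | (i < p)%N) x 0 i)^-1)%:E)%E.
Proof.
move=> _ pn r_gt0 u_ge0 u_convex r' r'_ge r'_lt x Dx x_gt0.
have r'_gt0 : 0 < r' by lra.
set mu := r - r'; set w := Delta_radius p r' mu x.
have mu_gt0 : 0 < mu by rewrite /mu; lra.
have w_gt0 i : 0 < w i.
  rewrite /w /Delta_radius; case: ifP => // ip.
  by rewrite mulr_gt0 ?divr_gt0 ?x_gt0.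
have box_sub : centered_box x w `<=` Delta p r.
  rewrite -(subrKC r' r); apply: centered_box_sub_Delta => //.
  by rewrite mu_gt0 /mu; lra.
have ux_ge0 : (0 <= u x)%E.
  by apply/u_ge0/box_sub => i; have := w_gt0 i; rewrite ltrBlDr ltrDl => ->.
have [s s_ge] := exists_orthant_box_ge u_convex box_sub.
have int_ge : (u x * (\prod_(i < n) w i)%:E <= integral_on (Delta p r) u)%E.
  rewrite (eq_bigr (fun i => (if s i then x 0 i + w i else x 0 i)
                           - (if s i then x 0 i else x 0 i - w i))); last first.
    by move=> i _; case: (s i); ring.
  apply: iter_lebesgue_integral_open_box_ge => // [i|y|y y_box].
  - by have := w_gt0 i; case: (s i); lra.
  - by case: asboolP => // /u_ge0.
  - by rewrite asboolT; [exact: s_ge | exact/box_sub/(orthant_box_sub y_box)].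
have P_gt0 : 0 < \prod_(i < n | (i < p)%N) x 0 i by apply: prodr_gt0.
have prod_w_gt0 : 0 < \prod_(i < n) w i by apply: prodr_gt0.
have -> : ((r' ^+ p / mu ^+ n)%:E * integral_on (Delta p r) u
           * ((\prod_(i < n | (i < p)%N) x 0 i)^-1)%:E
         = integral_on (Delta p r) u * (\prod_(i < n) w i)^-1%:E)%E.
  rewrite muleAC -EFinM muleC; congr (_ * _%:E)%E.
  have r'p_neq0 : r' ^+ p != 0 by rewrite expf_neq0 // gt_eqF.
  rewrite -[\prod_(i < n) w i](mulKf r'p_neq0) prod_Delta_radius ?gt_eqF //.
  by field; rewrite r'p_neq0 gt_eqF ?expf_neq0 ?gt_eqF.
by rewrite lee_pdivlMr.
Qed.
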